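(* Let $i,j,k$ be distinct integers with $1 \leq i,j,k \leq r$. For any $l \geq 1$, the graph $\mathcal{H}(V_i,V_j,V_k)$ does not contain a copy of $K_{2,2l^2+1}$ whose part of size $2$ consists of one vertex in $V_i$ and one vertex in $V_j$ and whose part of size $2l^2+1$ lies in $V_k$.
   Context: Let $r \geq 3$ and $l \geq 1$ be integers and $q$ a power of an odd prime. Let $\alpha_1, \dots, \alpha_r$ be distinct elements of $\mathbb{F}_q$, and let $m_1, \dots, m_l$ be distinct elements of $\mathbb{F}_q^* = \mathbb{F}_q\setminus\{0\}$ such that $m_s(\alpha_k - \alpha_i) \neq m_t(\alpha_k - \alpha_j)$ whenever $1 \leq s,t \leq l$ and $i,j,k$ are distinct integers in $\{1,\dots,r\}$. For $1 \leq i \leq r$ let $V_i = \mathbb{F}_q \times \mathbb{F}_q \times \{i\}$. For $x,y \in \mathbb{F}_q$, $a \in \mathbb{F}_q^*$, $s \in \{1,\dots,l\}$ let \[ e(x,y,a,m_s) = \{(x + \alpha_i m_s a,\; y + \alpha_i m_s a^2,\; i) : 1 \leq i \leq r\}. \] $\mathcal{H}$ is the $r$-uniform hypergraph with vertex set $V_1 \cup \dots \cup V_r$ and edge set $\{e(x,y,a,m_s) : x,y \in \mathbb{F}_q,\ a \in \mathbb{F}_q^*,\ 1 \leq s \leq l\}$. For $i \neq j$, $\mathcal{H}(V_i,V_j)$ is the bipartite graph with parts $V_i$ and $V_j$ in which $u \in V_i$ and $w \in V_j$ are adjacent iff $\{u,w\} \subseteq e$ for some edge $e$ of $\mathcal{H}$.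 For distinct $i,j,k$, $\mathcal{H}(V_i,V_j,V_k)$ is the graph on $V_i \cup V_j \cup V_k$ that is the union of $\mathcal{H}(V_i,V_j)$, $\mathcal{H}(V_j,V_k)$ and $\mathcal{H}(V_k,V_i)$. *)

From HB Require Import structures.
From mathcomp Require Import all_boot all_order all_algebra all_field.
Set Implicit Arguments. Unset Strict Implicit. Unset Printing Implicit Defensive.
Import GRing.Theory.
Local Open Scope ring_scope.

(* The point of V_i (i : 'I_r) with coordinates (x,y) is represented by the
   pair (x, y) together with the index i (carried separately).
   The edge e(x,y,a,m_s) contains, for each part index i, the vertex
   (x + alpha_i m_s a, y + alpha_i m_s a^2, i). *)
Definition edge_pt (F : fieldType) (r l : nat) (alpha : 'I_r -> F)
  (m : 'I_l -> F) (x y a : F) (s : 'I_l) (i : 'I_r) : F * F :=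
  (x + alpha i * m s * a, y + alpha i * m s * a ^+ 2).

Definition Hadj (F : fieldType) (r l : nat) (alpha : 'I_r -> F)
  (m : 'I_l -> F) (i j : 'I_r) (u w : F * F) : Prop :=
  exists (x y a : F) (s : 'I_l),
    a != 0 /\ u = edge_pt alpha m x y a s i /\ w = edge_pt alpha m x y a s j.

From HB Require Import structures.
From mathcomp Require Import all_boot all_order all_algebra all_field.
From mathcomp Require Import ring zify.
Import GRing.Theory.
Local Open Scope ring_scope.

(* If (u, i) and (z, k) lie on the edge e(x, y, a, m_s), then a eliminates to
   (z.1 - u.1)^2 = m_s (alpha_k - alpha_i) (z.2 - u.2): the common neighbours
   in V_k of u and w lie on one of l^2 intersections of a parabola through u
   with a parabola through w.  Two such parabolas have distinct leading
   coefficients by the hypothesis on the m_s and alpha_i, so they meet in at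
   most two points, since the difference of their equations is a genuine
   quadratic in the first coordinate.  Hence there are at most 2 l^2 common
   neighbours. *)

Lemma card_bigcup_le {T I : finType} (A : I -> {set T}) :
  (#|\bigcup_(i : I) A i| <= \sum_(i : I) #|A i|)%N.
Proof.
elim/big_rec2: _ => [|i n B _ leBn]; first by rewrite cards0.
exact: leq_trans (leq_card_setU _ _) (leq_add _ leBn).
Qed.

Lemma card_roots_lt_size {F : finFieldType} {p : {poly F}} :
  p != 0 -> (#|[set x | root p x]| < size p)%N.
Proof.
move=> p_neq0; rewrite cardE.
apply: max_poly_roots p_neq0 _ (enum_uniq _).
by apply/allP => x; rewrite mem_enum inE.
Qed.

Lemma card_quadratic_roots {F : finFieldType} (A B C : F) : A != 0 ->
  (#|[set x : F | (A * x ^+ 2 + B * x + C == 0)%R]| <= 2)%N.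
Proof.
move=> A_neq0; pose p := Poly [:: C; B; A].
have p_neq0 : p != 0.
  apply: contra_neq A_neq0 => p0.
  by rewrite -[A]/([:: C; B; A]`_2) -coef_Poly -/p p0 coef0.
have := leq_trans (card_roots_lt_size p_neq0) (size_Poly _); rewrite ltnS.
apply: leq_trans; apply/subset_leq_card/subsetP => x.
rewrite !inE /root horner_Poly /= => /eqP root_x; apply/eqP; rewrite -[RHS]root_x.
ring.
Qed.

Definition parabola {F : finFieldType} (c : F) (u : F * F) : {set F * F} :=
  [set z | (z.1 - u.1) ^+ 2 == c * (z.2 - u.2)].

Section Parabolas.

Variable F : finFieldType.
Implicit Types (c : F) (u w : F * F).

Lemma parabola_fst_inj {c u} : c != 0 -> {in parabola c u &, injective fst}.
Proof.
move=> c_neq0 [x y] [x' y']; rewrite !inE /= => /eqP eq_y /eqP eq_y' eq_x.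
rewrite -{}eq_x {x'} in eq_y' *; congr (_, _).
by apply/(addIr (- u.2))/(mulfI c_neq0); rewrite -eq_y -eq_y'.
Qed.

Lemma card_parabolaI c c' u w : c != 0 -> c != c' ->
  (#|parabola c u :&: parabola c' w| <= 2)%N.
Proof.
move=> c_neq0 c_neq_c'.
set A := c' - c; set B := 2%:R * (c * w.1 - c' * u.1).
set C := c' * u.1 ^+ 2 - c * w.1 ^+ 2 - c * c' * (w.2 - u.2).
have A_neq0 : A != 0 by rewrite subr_eq0 eq_sym.
apply: leq_trans _ (card_quadratic_roots A B C A_neq0).
have fst_inj : {in parabola c u :&: parabola c' w &, injective fst}.
  by move=> z z' /setIP[Pz _] /setIP[Pz' _]; exact: parabola_fst_inj c_neq0 z z' Pz Pz'.
rewrite -(card_in_imset fst_inj); apply/subset_leq_card/subsetP => x.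
case/imsetP=> z /setIP[]; rewrite !inE => /eqP Pz /eqP Pz' ->.
have -> : A * z.1 ^+ 2 + B * z.1 + C =
  c' * (z.1 - u.1) ^+ 2 - c * (z.1 - w.1) ^+ 2 - c * c' * (w.2 - u.2).
  by rewrite /A /B /C; ring.
by rewrite Pz Pz'; apply/eqP; ring.
Qed.

End Parabolas.

Lemma Hadj_parabola {F : finFieldType} {r l : nat} (alpha : 'I_r -> F)
    (m : 'I_l -> F) (i k : 'I_r) (u z : F * F) :
  Hadj alpha m i k u z -> exists s, z \in parabola (m s * (alpha k - alpha i)) u.
Proof.
case=> x [y [a [s [_ [-> ->]]]]]; exists s; rewrite inE /edge_pt /=.
by apply/eqP; ring.
Qed.

Theorem lemma3p9 (F : finFieldType) (r l : nat)
  (alpha : 'I_r -> F) (m : 'I_l -> F) (i j k : 'I_r) :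
  odd #|F| ->
  (3 <= r)%N -> (1 <= l)%N ->
  injective alpha -> injective m -> (forall s, m s != 0) ->
  (forall (s t : 'I_l) (i' j' k' : 'I_r),
      i' != j' -> j' != k' -> i' != k' ->
      m s * (alpha k' - alpha i') != m t * (alpha k' - alpha j')) ->
  i != j -> j != k -> i != k ->
  ~ exists (u w : F * F) (S : {set F * F}),
      #|S| = (2 * l ^ 2 + 1)%N /\
      (forall z, z \in S -> Hadj alpha m i k u z /\ Hadj alpha m j k w z).
Proof.
move=> _ _ _ alpha_inj _ m_neq0 m_sep neq_ij neq_jk neq_ik [u [w [S [cardS adjS]]]].
pose P (st : 'I_l * 'I_l) := parabola (m st.1 * (alpha k - alpha i)) u
                             :&: parabola (m st.2 * (alpha k - alpha j)) w.
have sub_S : S \subset \bigcup_st P st.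
  apply/subsetP => z /adjS[/Hadj_parabola[s Pz] /Hadj_parabola[t Pz']].
  by apply/bigcupP; exists (s, t); rewrite // inE Pz Pz'.
have cardP st : (#|P st| <= 2)%N.
  apply: card_parabolaI; last exact: m_sep.
  by rewrite mulf_neq0 // subr_eq0 (inj_eq alpha_inj) eq_sym.
have : (#|S| <= \sum_(st : 'I_l * 'I_l) 2)%N.
  apply: leq_trans (subset_leq_card sub_S) (leq_trans (card_bigcup_le P) _).
  exact: leq_sum.
by rewrite sum_nat_const card_prod card_ord cardS; lia.
Qed.
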